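(* Let $\mathbb{K}$ be a field of characteristic $0$. For a positive integer $r$, let $\mu(r)$ be the least integer $h$ such that $(1,r,h,h,r,1)$ is the Hilbert function of a standard graded Artinian Gorenstein $\mathbb{K}$-algebra (socle degree $5$), and let $\delta(r)=r-\mu(r)$. Then for every integer $m\geq 3$, \[\delta\!\left(m+\binom{m+3}{4}\right)\geq\frac{m+5}{4}\binom{m}{3}.\]
   Context: Standard graded Artinian Gorenstein algebras $Q/I$ are taken with $I$ containing no linear forms, so the codimension equals $h_1$. *)

From HB Require Import structures.
From mathcomp Require Import all_boot all_order all_algebra.
From mathcomp Require Import mpoly.
From Stdlib Require Import ClassicalEpsilon.
Set Implicit Arguments. Unset Strict Implicit. Unset Printing Implicit Defensive.
Import Order.TTheory GRing.Theory.
Local Open Scope ring_scope.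

Definition homogeneous (K : fieldType) (n d : nat) (f : {mpoly K[n]}) : Prop :=
  forall m, m \in msupp f -> mdeg m = d.

Definition hcomp (K : fieldType) (n d : nat) (f : {mpoly K[n]}) : {mpoly K[n]} :=
  \sum_(m <- msupp f | mdeg m == d) f@_m *: 'X_[m].

Definition is_ideal (K : fieldType) (n : nat) (I : {mpoly K[n]} -> Prop) : Prop :=
  [/\ I 0,
      (forall f g, I f -> I g -> I (f + g)) &
      (forall f g, I f -> I (g * f))].

Definition is_homog_ideal (K : fieldType) (n : nat) (I : {mpoly K[n]} -> Prop) : Prop :=
  is_ideal I /\ forall f d, I f -> I (hcomp d f).

(* dim_K ((S + I)/I) = k, for a K-subspace S of Q:
   there are k elements of S, linearly independent modulo I,
   spanning S modulo I. *)
Definition dim_mod (K : fieldType) (n : nat) (I S : {mpoly K[n]} -> Prop) (k : nat) : Prop :=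
  exists b : 'I_k -> {mpoly K[n]},
    (forall i, S (b i)) /\
    (forall c : 'I_k -> K, I (\sum_(i < k) c i *: b i) -> forall i, c i = 0) /\
    (forall f, S f -> exists c : 'I_k -> K, I (f - \sum_(i < k) c i *: b i)).

Definition hilb_fun_is (K : fieldType) (n : nat) (I : {mpoly K[n]} -> Prop)
  (hf : nat -> nat) : Prop :=
  forall d, dim_mod I (homogeneous d) (hf d).

(* socle of A = Q/I, lifted to Q: f with x_j f in I for all j *)
Definition socle (K : fieldType) (n : nat) (I : {mpoly K[n]} -> Prop) : {mpoly K[n]} -> Prop :=
  fun f => forall j : 'I_n, I ('X_j * f).

Definition AG_with_hilb (K : fieldType) (n : nat) (I : {mpoly K[n]} -> Prop)
  (hf : nat -> nat) : Prop :=
  [/\ is_homog_ideal I,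
      (forall f, homogeneous 1 f -> I f -> f = 0),
      hilb_fun_is I hf,
      (exists d0, forall d, (d0 <= d)%N -> forall f, homogeneous d f -> I f)
      & dim_mod I (socle I) 1].

Definition seq_1rhhr1 (r h : nat) : nat -> nat :=
  fun d => nth 0%N [:: 1; r; h; h; r; 1]%N d.

Definition realizable (K : fieldType) (r h : nat) : Prop :=
  exists n (I : {mpoly K[n]} -> Prop), AG_with_hilb I (seq_1rhhr1 r h).

(* mu(r): least h with (1,r,h,h,r,1) an AG Hilbert function
   (chosen by classical choice; the paper presupposes existence) *)
Definition mu (K : fieldType) (r : nat) : nat :=
  epsilon (inhabits 0%N)
    (fun h => realizable K r h /\ forall h', realizable K r h' -> (h <= h')%N).

Definition delta (K : fieldType) (r : nat) : int := (r%:Z - (mu K r)%:Z)%R.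

From HB Require Import structures.
From mathcomp Require Import all_boot all_order all_algebra.
From mathcomp Require Import mpoly.
From mathcomp Require Import zify lra.
From Stdlib Require Import Classical ClassicalEpsilon.
Set Implicit Arguments. Unset Strict Implicit. Unset Printing Implicit Defensive.
Import Order.TTheory GRing.Theory Num.Theory.
Local Open Scope ring_scope.

(* For m >= 1 let r = m + 'C(m + 3, 4) and work in the polynomial ring on
   x_0, ..., x_(m-1) and one variable y_v for each quartic monomial v in the x's.
   The annihilator, under contraction, of F = \sum_v y_v x^v defines an
   Artinian Gorenstein algebra of socle degree 5.  In degree d its monomials
   split into dual pairs: x^u (deg u = d <= 4) against y_w x^(w - u), and
   y_w x^(w - u) (deg u = 5 - d, d >= 1) against x^u; every other monomial is
   annihilated or congruent to one of these.  So the Hilbert function is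
   (1, r, h, h, r, 1) with h = 'C(m + 1, 2) + 'C(m + 2, 3), hence mu(r) <= h,
   and 4 (r - h) = (m + 5) 'C(m, 3) by Pascal's rule and the absorption
   identity 4 'C(m, 4) = (m - 3) 'C(m, 3).  Contraction makes Macaulay duality
   characteristic-free. *)

Section ApolarIdeal.
Variables (K : fieldType) (n : nat) (F : seq 'X_{1..n}).
Hypothesis F_uniq : uniq F.

(* [apolar p] is the contraction pairing of [p] with the inverse system
   [\sum_(c <- F) 'X_[c]]; [ann] is the annihilator of that polynomial. *)
Definition apolar (p : {mpoly K[n]}) : K := \sum_(c <- F) p@_c.

Lemma apolar_is_scalar : scalar apolar.
Proof.
move=> a p q; rewrite /apolar mulr_sumr -big_split.
by apply: eq_bigr => c _; rewrite mcoeffD mcoeffZ.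
Qed.

HB.instance Definition _ :=
  GRing.isLinear.Build K {mpoly K[n]} K _ apolar apolar_is_scalar.

Definition ann (g : {mpoly K[n]}) : Prop := forall h, apolar (g * h) = 0.

Definition no_cofactor (a : 'X_{1..n}) : Prop := forall b, (a + b)%MM \notin F.

Definition same_cofactors (a a' : 'X_{1..n}) : Prop :=
  forall b, ((a + b)%MM \in F) = ((a' + b)%MM \in F).

Lemma apolarX c : apolar 'X_[c] = (c \in F)%:R.
Proof.
rewrite /apolar; under eq_bigr do rewrite mcoeffX.
case: (boolP (c \in F)) => cF; last first.
  by rewrite big_seq big1 // => c' c'F; case: eqP cF => // ->; rewrite c'F.
rewrite (bigD1_seq c) //= eqxx big1 ?addr0 // => c' /negbTE.
by rewrite eq_sym => ->.
Qed.

Lemma apolarZMX a c b : apolar (a *: 'X_[c] * 'X_[b]) = a * ((c + b)%MM \in F)%:R.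
Proof. by rewrite -scalerAl scalarZ /= -mpolyXD apolarX. Qed.

Lemma apolarMX g b :
  apolar (g * 'X_[b]) = \sum_(a <- msupp g) g@_a * ((a + b)%MM \in F)%:R.
Proof.
rewrite {1}(mpolyE g) mulr_suml linear_sum /=.
by apply: eq_bigr => a _; rewrite apolarZMX.
Qed.

Lemma annP g : (forall b, apolar (g * 'X_[b]) = 0) -> ann g.
Proof.
move=> gXb0 h; rewrite (mpolyE h) mulr_sumr linear_sum /= big1 // => b _.
by rewrite -scalerAr scalarZ /= gXb0 mulr0.
Qed.

Lemma ann0 : ann 0.
Proof. by move=> h; rewrite mul0r raddf0. Qed.

Lemma annD f g : ann f -> ann g -> ann (f + g).
Proof. by move=> ann_f ann_g h; rewrite mulrDl raddfD /= ann_f ann_g addr0. Qed.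

Lemma annM f g : ann f -> ann (g * f).
Proof. by move=> ann_f h; rewrite -mulrA mulrCA ann_f. Qed.

Lemma annZ c f : ann f -> ann (c *: f).
Proof. by move=> ann_f h; rewrite -scalerAl scalarZ /= ann_f mulr0. Qed.

Lemma ann_ideal : is_ideal ann.
Proof. by split; [exact: ann0 | exact: annD | move=> f g; exact: annM]. Qed.

Lemma annX a : no_cofactor a -> ann 'X_[a].
Proof. by move=> a_nc; apply: annP => b; rewrite -mpolyXD apolarX (negbTE (a_nc b)). Qed.

Section Homogeneous.
Variable D : nat.
Hypothesis mdeg_F : forall c, c \in F -> mdeg c = D.

Lemma no_cofactor_mdeg a : (D < mdeg a)%N -> no_cofactor a.
Proof. by move=> ltDa b; apply/negP => /mdeg_F; rewrite mdegD; lia. Qed.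

Lemma ann_hcomp f d : ann f -> ann (hcomp d f).
Proof.
move=> ann_f; apply: annP => b.
have mdeg_cofactor a : (mdeg a == d) && ((a + b)%MM \in F) =
                       (d + mdeg b == D)%N && ((a + b)%MM \in F).
  case: (boolP (_ \in F)) => [/mdeg_F <-|]; last by rewrite !andbF.
  by rewrite mdegD eqn_add2r eq_sym.
have -> : apolar (hcomp d f * 'X_[b]) = (d + mdeg b == D)%:R * apolar (f * 'X_[b]).
  rewrite /hcomp mulr_suml linear_sum /= big_mkcond apolarMX mulr_sumr /=.
  apply: eq_bigr => a _; rewrite apolarZMX; have := mdeg_cofactor a.
  by case: (mdeg a == d); case: (_ == D)%N; case: (_ \in F) => //= _;
    rewrite ?(mul0r, mulr0, mul1r).
by rewrite ann_f mulr0.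
Qed.

Lemma ann_homog_ideal : is_homog_ideal ann.
Proof. by split; [exact: ann_ideal | move=> f d; exact: ann_hcomp]. Qed.

Lemma ann_homogeneous_gt d f : (D < d)%N -> homogeneous d f -> ann f.
Proof.
move=> ltDd f_d; rewrite (mpolyE f) big_seq; apply: (big_ind ann).
- exact: ann0.
- exact: annD.
by move=> a /f_d a_d; apply/annZ/annX/no_cofactor_mdeg; rewrite a_d.
Qed.

Lemma ann_socle c0 : c0 \in F -> dim_mod ann (socle ann) 1.
Proof.
move=> c0F; exists (fun _ => 'X_[c0]); split; [|split].
- move=> _ j; rewrite -mpolyXD; apply/annX/no_cofactor_mdeg.
  by rewrite mdegD mdeg1 (mdeg_F c0F).
- move=> c; rewrite big_ord1 => /(_ 1) + i; rewrite (ord1 i) mulr1 scalarZ /=.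
  by rewrite apolarX c0F mulr1.
move=> f soc_f; exists (fun _ => apolar f); rewrite big_ord1; apply: annP => b.
rewrite mulrBl raddfB /= apolarZMX.
have [->|b_neq0] := eqVneq b 0%MM.
  by rewrite mpolyX0 mulr1 addm0 c0F mulr1 subrr.
have [j bj_neq0] : exists j, b j != 0%N.
  apply/existsP; apply: contraR b_neq0; rewrite negb_exists => /forallP bj0.
  by apply/eqP/mnmP => j; rewrite mnm0E; move: (bj0 j); rewrite negbK => /eqP.
have -> : (c0 + b)%MM \in F = false.
  apply/negbTE/negP => /mdeg_F; rewrite mdegD (mdeg_F c0F).
  by move: b_neq0; rewrite -mdeg_eq0; lia.
have -> : b = (U_(j) + (b - U_(j)))%MM by rewrite addmC submK // lep1mP.
by rewrite mulr0 subr0 mpolyXD mulrA [f * _]mulrC soc_f.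
Qed.

End Homogeneous.

Section DualPairs.
Variables (d : nat) (s : seq ('X_{1..n} * 'X_{1..n})).
Hypothesis s_uniq : uniq s.
Hypothesis mdeg_s : forall p, p \in s -> mdeg p.1 = d.
Hypothesis s_dual :
  forall p q, p \in s -> q \in s -> ((p.1 + q.2)%MM \in F) = (p == q).

Lemma homogeneous_ann_eq0 f :
    (forall a, mdeg a = d -> exists2 p, p \in s & p.1 = a) ->
  homogeneous d f -> ann f -> f = 0.
Proof.
move=> s_cover f_d ann_f; apply/mpolyP => a; rewrite mcoeff0.
have [a_supp|] := boolP (a \in msupp f); last exact: memN_msupp_eq0.
have [p ps pa] := s_cover a (f_d a a_supp); subst a.
have := ann_f 'X_[p.2]; rewrite apolarMX (bigD1_seq _ a_supp (msupp_uniq f)) /=.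
rewrite s_dual // eqxx mulr1 big_seq_cond big1 ?addr0 // => a' /andP [a'_supp a'_neq].
have [p' p's p'a'] := s_cover a' (f_d a' a'_supp).
rewrite -p'a' s_dual //; case: eqVneq => [pp'|]; last by rewrite mulr0.
by move: a'_neq; rewrite -p'a' pp' eqxx.
Qed.

Hypothesis s_span : forall a, mdeg a = d ->
  no_cofactor a \/ exists2 p, p \in s & same_cofactors a p.1.

Lemma mem_F_dual_expansion a b : mdeg a = d ->
  ((a + b)%MM \in F)%:R =
  \sum_(p <- s) ((a + p.2)%MM \in F)%:R * ((p.1 + b)%MM \in F)%:R :> K.
Proof.
case/s_span => [a_nc | [p0 p0s a_p0]].
  by rewrite (negbTE (a_nc b)) big1 // => p _; rewrite (negbTE (a_nc _)) mul0r.
rewrite (eq_big_seq (fun p => (p == p0)%:R * ((p.1 + b)%MM \in F)%:R)); last first.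
  by move=> p ps; rewrite a_p0 s_dual // eq_sym.
rewrite (bigD1_seq p0) //= eqxx mul1r a_p0 big1 ?addr0 // => p /negbTE ->.
by rewrite mul0r.
Qed.

Lemma dim_mod_dual_pairs : dim_mod ann (homogeneous d) (size s).
Proof.
pose x0 := (0%MM, 0%MM) : 'X_{1..n} * 'X_{1..n}.
exists (fun i => 'X_[(nth x0 s i).1]); split; [|split].
- move=> i a; rewrite msuppX inE => /eqP ->; exact/mdeg_s/mem_nth.
- move=> c ann_c i; have := ann_c 'X_[(nth x0 s i).2].
  rewrite mulr_suml linear_sum /= (bigD1 i) //= apolarZMX s_dual ?mem_nth //.
  rewrite eqxx mulr1 big1 ?addr0 // => j j_neq_i.
  rewrite apolarZMX s_dual ?mem_nth // nth_uniq //.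
  by rewrite (inj_eq val_inj) (negbTE j_neq_i) mulr0.
(* The coordinate of f along p.1 is read off by pairing f with p.2. *)
move=> f f_d; exists (fun i => apolar (f * 'X_[(nth x0 s i).2])).
apply: annP => b; rewrite mulrBl raddfB /= mulr_suml linear_sum /=.
under eq_bigr do rewrite apolarZMX.
apply/eqP; rewrite subr_eq0 apolarMX; apply/eqP.
under eq_big_seq => a a_supp do
  rewrite (mem_F_dual_expansion b (f_d a a_supp)) mulr_sumr.
rewrite exchange_big /= (big_nth x0) big_mkord; apply: eq_bigr => i _.
by rewrite apolarMX mulr_suml; apply: eq_bigr => a _; rewrite mulrA.
Qed.

End DualPairs.

End ApolarIdeal.

Definition monomials k d : seq 'X_{1..k} :=
  [seq s2m t | t : d.-tuple 'I_k <- enum (basis k d)].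

Lemma mem_monomials k d v : (v \in monomials k d) = (mdeg v == d).
Proof. by rewrite basis_cover. Qed.

(* Variables x_0, ..., x_(m-1) come first, followed by y_v for v ranging
   over [quartics] in order; [Fsupp] is the support of F = \sum_v y_v x^v. *)
Section QuarticInverseSystem.
Variables (K : fieldType) (m' : nat).
Local Notation m := m'.+1.
Local Notation quartics := (monomials m 4).
Local Notation N := (size quartics).
Local Notation n := (m + N)%N.

Definition xmon (v : 'X_{1..m}) : 'X_{1..n} :=
  [multinom (if split i is inl j then v j else 0%N) | i < n].
Definition ymon (u : 'X_{1..N}) : 'X_{1..n} :=
  [multinom (if split i is inr k then u k else 0%N) | i < n].
Definition xpart (a : 'X_{1..n}) : 'X_{1..m} := [multinom a (lshift N j) | j < m].
Definition ypart (a : 'X_{1..n}) : 'X_{1..N} := [multinom a (rshift m k) | k < N].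

Lemma xpart_xmon v : xpart (xmon v) = v.
Proof. by apply/mnmP => j; rewrite !mnmE (unsplitK (inl _ j)). Qed.
Lemma ypart_xmon v : ypart (xmon v) = 0%MM.
Proof. by apply/mnmP => k; rewrite !mnmE (unsplitK (inr _ k)). Qed.
Lemma xpart_ymon u : xpart (ymon u) = 0%MM.
Proof. by apply/mnmP => j; rewrite !mnmE (unsplitK (inl _ j)). Qed.
Lemma ypart_ymon u : ypart (ymon u) = u.
Proof. by apply/mnmP => k; rewrite !mnmE (unsplitK (inr _ k)). Qed.
Lemma xpartD a b : xpart (a + b)%MM = (xpart a + xpart b)%MM.
Proof. by apply/mnmP => j; rewrite !mnmE. Qed.
Lemma ypartD a b : ypart (a + b)%MM = (ypart a + ypart b)%MM.
Proof. by apply/mnmP => k; rewrite !mnmE. Qed.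

Lemma monomial_eq a b : xpart a = xpart b -> ypart a = ypart b -> a = b.
Proof.
move=> /mnmP eq_x /mnmP eq_y; apply/mnmP => i.
case: (splitP i) => [j|k] i_eq.
  have -> : i = lshift N j by apply/val_inj.
  by have := eq_x j; rewrite !mnmE.
have -> : i = rshift m k by apply/val_inj.
by have := eq_y k; rewrite !mnmE.
Qed.

Lemma monomial_parts a : a = (xmon (xpart a) + ymon (ypart a))%MM.
Proof.
apply: monomial_eq.
  by rewrite xpartD xpart_xmon xpart_ymon addm0.
by rewrite ypartD ypart_xmon ypart_ymon add0m.
Qed.

Lemma mdeg_parts a : mdeg a = (mdeg (xpart a) + mdeg (ypart a))%N.
Proof.
rewrite !mdegE big_split_ord; congr (_ + _)%N.
  by apply: eq_bigr => j _; rewrite mnmE.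
by apply: eq_bigr => k _; rewrite mnmE.
Qed.

Lemma mdeg_xmon v : mdeg (xmon v) = mdeg v.
Proof. by rewrite mdeg_parts xpart_xmon ypart_xmon mdeg0 addn0. Qed.

Lemma xmon_inj : injective xmon.
Proof. by move=> v w /(congr1 xpart); rewrite !xpart_xmon. Qed.

Definition yvar (v : 'X_{1..m}) : 'X_{1..N} :=
  [multinom (nth 0%MM quartics k == v : nat) | k < N].

Lemma yvar_nth (k : 'I_N) : yvar (nth 0%MM quartics k) = U_(k)%MM.
Proof.
apply/mnmP => k'; rewrite !mnmE; congr nat_of_bool.
by rewrite nth_uniq ?uniq_basis // eq_sym.
Qed.

Lemma yvar_unit v : v \in quartics ->
  exists k : 'I_N, yvar v = U_(k)%MM /\ nth 0%MM quartics k = v.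
Proof.
move=> vQ; have k_lt : (index v quartics < N)%N by rewrite index_mem.
by exists (Ordinal k_lt); rewrite -yvar_nth /= nth_index.
Qed.

Lemma mdeg_yvar v : v \in quartics -> mdeg (yvar v) = 1%N.
Proof. by case/yvar_unit => k [-> _]; rewrite mdeg1. Qed.

Lemma yvar_inj v w : v \in quartics -> w \in quartics -> yvar v = yvar w -> v = w.
Proof.
move=> /yvar_unit [k [-> <-]] /yvar_unit [l [-> <-]] /eqP.
by rewrite eq_mnm1 => /eqP ->.
Qed.

Lemma mdeg1_yvar (u : 'X_{1..N}) : mdeg u = 1%N -> exists2 v, v \in quartics & u = yvar v.
Proof.
move=> /eqP /mdeg1P [k /eqP ->]; exists (nth 0%MM quartics k).
  exact: mem_nth.
by rewrite yvar_nth.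
Qed.

Definition Fsupp : seq 'X_{1..n} := [seq (ymon (yvar v) + xmon v)%MM | v <- quartics].

Lemma mem_Fsupp c :
  (c \in Fsupp) = has (fun v => (ypart c == yvar v) && (xpart c == v)) quartics.
Proof.
apply/mapP/hasP => [[v vQ ->]|[v vQ /andP [/eqP c_y /eqP c_x]]].
  exists v => //.
  by rewrite ypartD xpartD ypart_xmon ypart_ymon xpart_xmon xpart_ymon addm0 add0m !eqxx.
by exists v => //; rewrite (monomial_parts c) c_y c_x addmC.
Qed.

Lemma mem_Fsupp_yvar c w : w \in quartics -> ypart c = yvar w ->
  (c \in Fsupp) = (xpart c == w).
Proof.
move=> wQ c_y; rewrite mem_Fsupp; apply/hasP/idP => [[v vQ]|/eqP c_x].
  by case/andP => /eqP; rewrite c_y => /(yvar_inj wQ vQ) <-.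
by exists w => //; rewrite c_y c_x !eqxx.
Qed.

Lemma notin_Fsupp_ydeg c : mdeg (ypart c) != 1%N -> c \notin Fsupp.
Proof.
apply: contra; rewrite mem_Fsupp => /hasP [v vQ /andP [/eqP -> _]].
by rewrite mdeg_yvar.
Qed.

Lemma mdeg_xpart_Fsupp c : c \in Fsupp -> mdeg (xpart c) = 4%N.
Proof.
by rewrite mem_Fsupp => /hasP [v vQ /andP [_ /eqP ->]]; apply/eqP; rewrite -mem_monomials.
Qed.

Lemma Fsupp_uniq : uniq Fsupp.
Proof.
rewrite map_inj_uniq ?uniq_basis // => v w /(congr1 xpart).
by rewrite !xpartD !xpart_xmon !xpart_ymon !add0m.
Qed.

Lemma mdeg_Fsupp c : c \in Fsupp -> mdeg c = 5%N.
Proof.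
move=> cF; rewrite mdeg_parts (mdeg_xpart_Fsupp cF).
by move: cF; rewrite mem_Fsupp => /hasP [v vQ /andP [/eqP -> _]]; rewrite mdeg_yvar.
Qed.

(* [complement r] is y_w x^(w - r) for w := r x_0^(4 - deg r), so that
   x^r complement r = y_w x^w lies in [Fsupp]. *)
Definition pad (r : 'X_{1..m}) : 'X_{1..m} := (U_(ord0) *+ (4 - mdeg r))%MM.
Definition complement (r : 'X_{1..m}) : 'X_{1..n} :=
  (ymon (yvar (r + pad r)) + xmon (pad r))%MM.

Lemma mdeg_pad r : mdeg (pad r) = (4 - mdeg r)%N.
Proof. by rewrite mdegMn mdeg1 mul1n. Qed.

Lemma pad_quartic r : (mdeg r <= 4)%N -> (r + pad r)%MM \in quartics.
Proof. by move=> r_le4; rewrite mem_monomials mdegD mdeg_pad; apply/eqP; lia. Qed.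

Lemma xpart_complement r : xpart (complement r) = pad r.
Proof. by rewrite xpartD xpart_ymon xpart_xmon add0m. Qed.

Lemma ypart_complement r : ypart (complement r) = yvar (r + pad r).
Proof. by rewrite ypartD ypart_ymon ypart_xmon addm0. Qed.

Lemma mdeg_complement r : (mdeg r <= 4)%N -> mdeg (complement r) = (5 - mdeg r)%N.
Proof.
move=> r_le4; rewrite mdeg_parts xpart_complement ypart_complement.
by rewrite mdeg_yvar ?pad_quartic // mdeg_pad; lia.
Qed.

Lemma complement_inj r r' : (mdeg r <= 4)%N -> (mdeg r' <= 4)%N ->
  complement r = complement r' -> r = r'.
Proof.
move=> r_le4 r'_le4 eq_rr'.
have eq_pad := congr1 xpart eq_rr'; have eq_y := congr1 ypart eq_rr'.
rewrite !xpart_complement in eq_pad; rewrite !ypart_complement in eq_y.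
by have := yvar_inj (pad_quartic r_le4) (pad_quartic r'_le4) eq_y; rewrite eq_pad; apply: addIm.
Qed.

Lemma xmon_neq_complement v r : (mdeg r <= 4)%N -> xmon v != complement r.
Proof.
move=> r_le4; apply/eqP => /(congr1 (mdeg \o ypart)) /=.
by rewrite ypart_xmon ypart_complement mdeg0 mdeg_yvar ?pad_quartic.
Qed.

Lemma mem_Fsupp_xmon_complement v r : (mdeg r <= 4)%N ->
  ((xmon v + complement r)%MM \in Fsupp) = (v == r).
Proof.
move=> r_le4; rewrite (mem_Fsupp_yvar (pad_quartic r_le4)); last first.
  by rewrite ypartD ypart_xmon ypart_complement add0m.
by rewrite xpartD xpart_xmon xpart_complement eqm_add2r.
Qed.

Definition dual_basis d : seq ('X_{1..n} * 'X_{1..n}) :=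
  [seq (xmon v, complement v) | v <- if (d <= 4)%N then monomials m d else [::]] ++
  [seq (complement r, xmon r) | r <- if (1 <= d <= 5)%N then monomials m (5 - d) else [::]].

Lemma mem_dual_basis d p : p \in dual_basis d ->
  (exists2 v, mdeg v = d /\ (d <= 4)%N & p = (xmon v, complement v)) \/
  (exists2 r, mdeg r = (5 - d)%N /\ (1 <= d <= 5)%N & p = (complement r, xmon r)).
Proof.
rewrite mem_cat => /orP [] /mapP [v]; case: ifP => // d_range;
  rewrite mem_monomials => /eqP v_deg ->; [left | right]; by exists v.
Qed.

Lemma xmon_in_dual_basis v : (mdeg v <= 4)%N -> (xmon v, complement v) \in dual_basis (mdeg v).
Proof.
move=> v_le4; rewrite mem_cat; apply/orP; left; apply/mapP.
by exists v; rewrite ?v_le4 ?mem_monomials.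
Qed.

Lemma complement_in_dual_basis r d : mdeg r = (5 - d)%N -> (1 <= d <= 5)%N ->
  (complement r, xmon r) \in dual_basis d.
Proof.
move=> r_deg d_range; rewrite mem_cat; apply/orP; right; apply/mapP.
by exists r; rewrite ?d_range ?mem_monomials ?r_deg.
Qed.

Lemma mdeg_dual_basis d p : p \in dual_basis d -> mdeg p.1 = d.
Proof.
case/mem_dual_basis => [[v [v_deg _] ->] | [r [r_deg d_range] ->]] /=.
  by rewrite mdeg_xmon.
by rewrite mdeg_complement; lia.
Qed.

Lemma dual_basis_uniq d : uniq (dual_basis d).
Proof.
rewrite cat_uniq; apply/and3P; split.
- rewrite map_inj_uniq; first by case: ifP => _; rewrite ?uniq_basis.
  by move=> v w /(congr1 fst) /xmon_inj.
- apply/hasP => [[p /mapP [r r_in ->] /mapP [v _ /(congr1 fst) /= r_v]]].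
  move: r_in; case: ifP => // d_range; rewrite mem_monomials => /eqP r_deg.
  by have /eqP[] := @xmon_neq_complement v r ltac:(lia).
- rewrite map_inj_in_uniq; first by case: ifP => _; rewrite ?uniq_basis.
  move=> r r'; case: ifP => // d_range; rewrite !mem_monomials => /eqP r_deg /eqP r'_deg.
  by move=> /(congr1 fst) /complement_inj; apply; lia.
Qed.

Lemma dual_basis_dual d p q : p \in dual_basis d -> q \in dual_basis d ->
  ((p.1 + q.2)%MM \in Fsupp) = (p == q).
Proof.
case/mem_dual_basis => [[v [v_deg v_le4] ->] | [r [r_deg d_range] ->]];
case/mem_dual_basis => [[v' [v'_deg v'_le4] ->] | [r' [r'_deg d'_range] ->]] /=.
- rewrite mem_Fsupp_xmon_complement; last by rewrite v'_deg.
  by apply/eqP/eqP => [-> // | /(congr1 fst) /xmon_inj ->].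
- rewrite (negbTE (notin_Fsupp_ydeg _)); last first.
    by rewrite ypartD !ypart_xmon add0m mdeg0.
  by apply/esym/negbTE; rewrite xpair_eqE negb_and xmon_neq_complement //; lia.
- rewrite (negbTE (notin_Fsupp_ydeg _)); last first.
    by rewrite ypartD !ypart_complement mdegD !mdeg_yvar ?pad_quartic //; lia.
  by apply/esym/negbTE; rewrite xpair_eqE negb_and eq_sym xmon_neq_complement //; lia.
- rewrite addmC mem_Fsupp_xmon_complement; last by lia.
  by apply/eqP/eqP => [-> // | /(congr1 snd) /xmon_inj ->].
Qed.

Lemma no_cofactor_ydeg a : (1 < mdeg (ypart a))%N -> no_cofactor Fsupp a.
Proof. by move=> a_ydeg b; apply: notin_Fsupp_ydeg; rewrite ypartD mdegD; lia. Qed.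

Lemma no_cofactor_xdeg a : (4 < mdeg (xpart a))%N -> no_cofactor Fsupp a.
Proof. by move=> a_xdeg b; apply/negP => /mdeg_xpart_Fsupp; rewrite xpartD mdegD; lia. Qed.

Lemma no_cofactor_yvar w a : w \in quartics -> ypart a = yvar w ->
  ~~ (xpart a <= w)%MM -> no_cofactor Fsupp a.
Proof.
move=> wQ a_y not_le b; have [b_y0|] := eqVneq (ypart b) 0%MM.
  rewrite (mem_Fsupp_yvar wQ); last by rewrite ypartD a_y b_y0 addm0.
  by apply: contra not_le; rewrite xpartD => /eqP <-; rewrite lem_addr.
rewrite -mdeg_eq0 => b_ydeg; apply: notin_Fsupp_ydeg.
by rewrite ypartD mdegD a_y mdeg_yvar //; lia.
Qed.

Lemma same_cofactors_complement w a : w \in quartics -> ypart a = yvar w ->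
  (xpart a <= w)%MM -> same_cofactors Fsupp a (complement (w - xpart a)).
Proof.
move=> wQ a_y le_aw; set r := (w - xpart a)%MM.
have w_eq : w = (r + xpart a)%MM by rewrite submK.
have r_le4 : (mdeg r <= 4)%N.
  by move: wQ; rewrite mem_monomials w_eq mdegD => /eqP; lia.
move=> b; have [b_y0|] := eqVneq (ypart b) 0%MM.
  rewrite (mem_Fsupp_yvar wQ); last by rewrite ypartD a_y b_y0 addm0.
  rewrite (mem_Fsupp_yvar (pad_quartic r_le4)); last first.
    by rewrite ypartD ypart_complement b_y0 addm0.
  rewrite (xpartD a) (xpartD (complement r)) xpart_complement w_eq.
  by rewrite (addmC r) (addmC r) !eqm_add2l.
rewrite -mdeg_eq0 => b_ydeg.
rewrite !(negbTE (notin_Fsupp_ydeg _)) // ypartD mdegD ?ypart_complement ?a_y.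
  by rewrite mdeg_yvar ?pad_quartic //; lia.
by rewrite mdeg_yvar //; lia.
Qed.

Lemma dual_basis_span d a : mdeg a = d ->
  no_cofactor Fsupp a \/ exists2 p, p \in dual_basis d & same_cofactors Fsupp a p.1.
Proof.
move=> <-{d}; have a_deg := mdeg_parts a.
case: (ltngtP (mdeg (ypart a)) 1) => [a_ydeg | a_ydeg | /mdeg1_yvar [w wQ a_y]].
- have a_y0 : ypart a = 0%MM by apply/eqP; rewrite -mdeg_eq0; lia.
  have a_x : xmon (xpart a) = a.
    by apply: monomial_eq; rewrite ?xpart_xmon ?ypart_xmon ?a_y0.
  have [a_xdeg|] := leqP (mdeg (xpart a)) 4; last by left; apply: no_cofactor_xdeg.
  right; exists (xmon (xpart a), complement (xpart a)); last by move=> b; rewrite a_x.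
  by rewrite a_deg a_y0 mdeg0 addn0; apply: xmon_in_dual_basis.
- by left; apply: no_cofactor_ydeg.
have [le_aw|not_le] := boolP (xpart a <= w)%MM; last first.
  by left; apply: no_cofactor_yvar not_le.
right; exists (complement (w - xpart a), xmon (w - xpart a)).
  have w_deg : mdeg w = 4%N by apply/eqP; rewrite -mem_monomials.
  move: w_deg a_deg; rewrite -{1}(submK le_aw) mdegD a_y mdeg_yvar // => w_deg a_deg.
  by apply: complement_in_dual_basis; lia.
exact: same_cofactors_complement.
Qed.

Lemma dual_basis1_cover a : mdeg a = 1%N -> exists2 p, p \in dual_basis 1 & p.1 = a.
Proof.
move=> a_deg1; have a_deg := mdeg_parts a.
have [a_y0|a_y_neq0] := eqVneq (ypart a) 0%MM.
  exists (xmon (xpart a), complement (xpart a)).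
    have a_xdeg : mdeg (xpart a) = 1%N by rewrite a_deg1 a_y0 mdeg0 addn0 in a_deg.
    by have := @xmon_in_dual_basis (xpart a); rewrite a_xdeg; apply.
  by apply: monomial_eq; rewrite ?xpart_xmon ?ypart_xmon ?a_y0.
have a_ydeg : mdeg (ypart a) = 1%N by move: a_y_neq0; rewrite -mdeg_eq0; lia.
have [w wQ a_y] := mdeg1_yvar a_ydeg.
have w_deg : mdeg w = 4%N by apply/eqP; rewrite -mem_monomials.
have a_x0 : xpart a = 0%MM by apply/eqP; rewrite -mdeg_eq0; lia.
have pad_w : pad w = 0%MM by rewrite /pad w_deg mulm0n.
exists (complement w, xmon w); first by apply: complement_in_dual_basis; rewrite ?w_deg.
by apply: monomial_eq; rewrite /= ?xpart_complement ?ypart_complement pad_w ?a_x0 ?addm0.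
Qed.

Lemma size_dual_basis d : size (dual_basis d) =
  ((if (d <= 4)%N then 'C(d + m', d) else 0) +
   (if (1 <= d <= 5)%N then 'C(5 - d + m', 5 - d) else 0))%N.
Proof. by rewrite size_cat !size_map; congr (_ + _)%N; case: ifP; rewrite ?size_basis. Qed.

Lemma size_dual_basis_1rhhr1 d : size (dual_basis d) =
  seq_1rhhr1 ('C(1 + m', 1) + 'C(4 + m', 4)) ('C(2 + m', 2) + 'C(3 + m', 3)) d.
Proof.
rewrite size_dual_basis /seq_1rhhr1.
by case: d => [|[|[|[|[|[|d]]]]]]; rewrite ?bin0 //; [rewrite addnC .. | case: d].
Qed.

Lemma ann_Fsupp_AG : AG_with_hilb (ann (K := K) Fsupp)
  (seq_1rhhr1 ('C(1 + m', 1) + 'C(4 + m', 4)) ('C(2 + m', 2) + 'C(3 + m', 3))).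
Proof.
split.
- exact (ann_homog_ideal K Fsupp_uniq mdeg_Fsupp).
- by move=> f; apply: (homogeneous_ann_eq0 Fsupp_uniq (@dual_basis_dual 1) dual_basis1_cover).
- move=> d; rewrite -size_dual_basis_1rhhr1.
  exact (dim_mod_dual_pairs K Fsupp_uniq (dual_basis_uniq d) (@mdeg_dual_basis d)
    (@dual_basis_dual d) (@dual_basis_span d)).
- by exists 6%N => d d_ge6 f; apply: (ann_homogeneous_gt Fsupp_uniq mdeg_Fsupp d_ge6).
have x0_quartic : (U_(ord0) *+ 4)%MM \in quartics by rewrite mem_monomials mdegMn mdeg1.
exact (ann_socle K Fsupp_uniq mdeg_Fsupp (map_f _ x0_quartic)).
Qed.

End QuarticInverseSystem.

Lemma realizable_quartic (K : fieldType) m : (0 < m)%N ->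
  realizable K (m + 'C(m + 3, 4)) ('C(m + 1, 2) + 'C(m + 2, 3)).
Proof.
case: m => // m' _.
have -> : (m'.+1 + 'C(m'.+1 + 3, 4) = 'C(1 + m', 1) + 'C(4 + m', 4))%N.
  by rewrite bin1 add1n; congr (_ + 'C(_, _))%N; lia.
have -> : ('C(m'.+1 + 1, 2) + 'C(m'.+1 + 2, 3) = 'C(2 + m', 2) + 'C(3 + m', 3))%N.
  by congr ('C(_, _) + 'C(_, _))%N; lia.
by exists _, (ann (Fsupp m')); exact: ann_Fsupp_AG.
Qed.

Lemma exists_least (P : nat -> Prop) h :
  P h -> exists h0, P h0 /\ forall h', P h' -> (h0 <= h')%N.
Proof.
elim/ltn_ind: h => h IH Ph.
have [[h' lt_h'h Ph'] | no_smaller] := classic (exists2 h', (h' < h)%N & P h').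
  exact: IH Ph'.
exists h; split => // h' Ph'; rewrite leqNgt; apply/negP => lt_h'h.
by apply: no_smaller; exists h'.
Qed.

Lemma mu_le (K : fieldType) r h : realizable K r h -> (mu K r <= h)%N.
Proof.
move=> rh; have [_ mu_least] := epsilon_spec (inhabits 0%N)
  (fun h => realizable K r h /\ forall h', realizable K r h' -> (h <= h')%N)
  (exists_least rh).
exact: mu_least.
Qed.

Lemma excess_binomial m :
  (4 * (m + 'C(m + 3, 4)) = 4 * ('C(m + 1, 2) + 'C(m + 2, 3)) + (m + 5) * 'C(m, 3))%N.
Proof.
rewrite !addn3 !addn2 !addn1 !binS !bin1.
have [m_ge3 | m_lt3] := leqP 3 m; last first.
  have m_lt4 : (m < 4)%N by lia.
  by rewrite (bin_small m_lt3) (bin_small m_lt4); lia.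
have := mul_bin_left m 3.
by rewrite (_ : (m + 5 = (m - 3) + 8)%N) ?mulnDl; lia.
Qed.

Theorem proposition3p14 (K : fieldType) (hK : [pchar K] =i pred0) (m : nat) :
  (3 <= m)%N ->
  ((m + 5)%:R / 4%:R) * ('C(m, 3))%:R <=
    ((delta K (m + 'C(m + 3, 4))%N)%:~R : rat).
Proof.
move=> m_ge3; set r := (m + 'C(m + 3, 4))%N; set h := ('C(m + 1, 2) + 'C(m + 2, 3))%N.
have mu_le_h : (mu K r)%:R <= h%:R :> rat.
  by rewrite ler_nat; apply/mu_le/realizable_quartic; apply: leq_trans m_ge3.
have r_eq : 4%:R * r%:R = 4%:R * h%:R + ((m + 5) * 'C(m, 3))%:R :> rat.
  by rewrite -!natrM -natrD excess_binomial.
rewrite /delta intrB -!pmulrn mulrAC -natrM.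
lra.
Qed.
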